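(* Let $\kappa\in\mathbb{K}$, let $(\mathfrak{g},[-,-]_\mathfrak{g},\alpha_\mathfrak{g})$ and $(\mathfrak{h},[-,-]_\mathfrak{h},\alpha_\mathfrak{h})$ be Hom-Lie algebras, $\rho$ an action of $\mathfrak{g}$ on $\mathfrak{h}$, and $\mathcal{A}:\mathfrak{h}\to\mathfrak{g}$ a $\kappa$-weighted $\mathcal{O}$-operator with respect to $\rho$. Then: (i) $(\mathfrak{h},[-,-],\star,\alpha_\mathfrak{h})$ is a Hom-post-Lie algebra, where $[u,v]=\kappa[u,v]_\mathfrak{h}$ and $u\star v=\rho(\mathcal{A}u)v$; (ii) $(\mathfrak{h},[-,-]_\mathcal{A},\alpha_\mathfrak{h})$ is a Hom-Lie algebra, where $[u,v]_\mathcal{A}=\rho(\mathcal{A}u)v-\rho(\mathcal{A}v)u+\kappa[u,v]_\mathfrak{h}$, and $\mathcal{A}$ is a Hom-Lie algebra homomorphism from $(\mathfrak{h},[-,-]_\mathcal{A},\alpha_\mathfrak{h})$ to $(\mathfrak{g},[-,-]_\mathfrak{g},\alpha_\mathfrak{g})$; (iii) the map $\mathrm{ad}:\mathfrak{h}\to\mathrm{End}(\mathfrak{h})$, $\mathrm{ad}(u)v=u\star v=\rho(\mathcal{A}u)v$, is an action of the Hom-Lie algebra $(\mathfrak{h},[-,-]_\mathcal{A},\alpha_\mathfrak{h})$ on the Hom-Lie algebra $(\mathfrak{h},[-,-]_\mathfrak{h},\alpha_\mathfrak{h})$.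
   Context: All vector spaces are over a field $\mathbb{K}$ of characteristic zero. A Hom-Lie algebra $(\mathfrak{g},[-,-]_\mathfrak{g},\alpha_\mathfrak{g})$ is a vector space with a skew-symmetric bilinear bracket and a linear map $\alpha_\mathfrak{g}$ with $\alpha_\mathfrak{g}([x,y]_\mathfrak{g})=[\alpha_\mathfrak{g}(x),\alpha_\mathfrak{g}(y)]_\mathfrak{g}$ satisfying $[\alpha_\mathfrak{g}(x),[y,z]_\mathfrak{g}]_\mathfrak{g}+[\alpha_\mathfrak{g}(y),[z,x]_\mathfrak{g}]_\mathfrak{g}+[\alpha_\mathfrak{g}(z),[x,y]_\mathfrak{g}]_\mathfrak{g}=0$. A homomorphism $\varphi$ of Hom-Lie algebras satisfies $\varphi\circ\alpha_1=\alpha_2\circ\varphi$ and $\varphi([x,y]_1)=[\varphi x,\varphi y]_2$. A representation of a Hom-Lie algebra $\mathfrak{g}$ on $(\mathfrak{h},\alpha_\mathfrak{h})$ ($\mathfrak{h}$ a vector space, $\alpha_\mathfrak{h}$ linear) is a linear map $\rho:\mathfrak{g}\to\mathrm{End}(\mathfrak{h})$ with $\rho(\alpha_\mathfrak{g}(x))\circ\alpha_\mathfrak{h}=\alpha_\mathfrak{h}\circ\rho(x)$ and $\rho([x,y]_\mathfrak{g})\circ\alpha_\mathfrak{h}=\rho(\alpha_\mathfrak{g}(x))\circ\rho(y)-\rho(\alpha_\mathfrak{g}(y))\circ\rho(x)$. An action of $\mathfrak{g}$ on a Hom-Lie algebra $(\mathfrak{h},[-,-]_\mathfrak{h},\alpha_\mathfrak{h})$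 is a representation $\rho$ on $(\mathfrak{h},\alpha_\mathfrak{h})$ such that for all $x\in\mathfrak{g}$, $u,v\in\mathfrak{h}$: $\rho(\alpha_\mathfrak{g}(x))[u,v]_\mathfrak{h}=[\rho(x)u,\alpha_\mathfrak{h}(v)]_\mathfrak{h}+[\alpha_\mathfrak{h}(u),\rho(x)v]_\mathfrak{h}$ and $[\rho(x)u,\alpha_\mathfrak{h}(v)]_\mathfrak{h}=0$. A $\kappa$-weighted $\mathcal{O}$-operator from $\mathfrak{h}$ to $\mathfrak{g}$ with respect to an action $\rho$ is a linear map $\mathcal{A}:\mathfrak{h}\to\mathfrak{g}$ with $\mathcal{A}\circ\alpha_\mathfrak{h}=\alpha_\mathfrak{g}\circ\mathcal{A}$ and $[\mathcal{A}u,\mathcal{A}v]_\mathfrak{g}=\mathcal{A}(\rho(\mathcal{A}u)v-\rho(\mathcal{A}v)u+\kappa[u,v]_\mathfrak{h})$ for all $u,v\in\mathfrak{h}$. A Hom-post-Lie algebra $(\mathfrak{h},[-,-],\star,\alpha_\mathfrak{h})$ is a Hom-Lie algebra $(\mathfrak{h},[-,-],\alpha_\mathfrak{h})$ with a bilinear map $\star$ such that $\alpha_\mathfrak{h}(u\star v)=\alpha_\mathfrak{h}(u)\star\alpha_\mathfrak{h}(v)$ and for all $u,v,w$: $\alpha_\mathfrak{h}(u)\star[v,w]=[u\star v,\alpha_\mathfrak{h}(w)]+[\alpha_\mathfrak{h}(v),u\star w]$; $([u,v]+u\star v-v\star u)\star\alpha_\mathfrak{h}(w)=\alpha_\mathfrak{h}(u)\star(v\star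 w)-\alpha_\mathfrak{h}(v)\star(u\star w)$; $\alpha_\mathfrak{h}(u)\star[v,w]=[u\star v,\alpha_\mathfrak{h}(w)]=0$. *)

From HB Require Import structures.
From mathcomp Require Import all_boot all_order all_algebra.
Set Implicit Arguments. Unset Strict Implicit. Unset Printing Implicit Defensive.
Import GRing.Theory.
Local Open Scope ring_scope.

Section HomLie.
Variable K : fieldType.

Definition lin (V W : lmodType K) (f : V -> W) : Prop :=
  forall (a : K) (u v : V), f (a *: u + v) = a *: f u + f v.

Definition bilin (U V W : lmodType K) (b : U -> V -> W) : Prop :=
  (forall u, lin (b u)) /\ (forall v, lin (fun u => b u v)).

Definition HomLieAlg (V : lmodType K) (br : V -> V -> V) (al : V -> V) : Prop :=
  [/\ bilin br, lin al,
      (forall x y, br x y = - br y x),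
      (forall x y, al (br x y) = br (al x) (al y)) &
      (forall x y z,
         br (al x) (br y z) + br (al y) (br z x) + br (al z) (br x y) = 0)].

Definition HomLieHom (V W : lmodType K) (br1 : V -> V -> V) (al1 : V -> V)
  (br2 : W -> W -> W) (al2 : W -> W) (phi : V -> W) : Prop :=
  [/\ lin phi,
      (forall x, phi (al1 x) = al2 (phi x)) &
      (forall x y, phi (br1 x y) = br2 (phi x) (phi y))].

Definition HomLieRep (G H : lmodType K) (brg : G -> G -> G) (alg : G -> G)
  (alh : H -> H) (rho : G -> H -> H) : Prop :=
  [/\ bilin rho, lin alh,
      (forall x v, rho (alg x) (alh v) = alh (rho x v)) &
      (forall x y v,
         rho (brg x y) (alh v) = rho (alg x) (rho y v) - rho (alg y) (rho x v))].

Definition HomLieAction (G H : lmodType K) (brg : G -> G -> G) (alg : G -> G)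
  (brh : H -> H -> H) (alh : H -> H) (rho : G -> H -> H) : Prop :=
  [/\ HomLieRep brg alg alh rho,
      (forall x u v,
         rho (alg x) (brh u v) = brh (rho x u) (alh v) + brh (alh u) (rho x v)) &
      (forall x u v, brh (rho x u) (alh v) = 0)].

Definition OOperator (G H : lmodType K) (kappa : K) (brg : G -> G -> G)
  (alg : G -> G) (brh : H -> H -> H) (alh : H -> H) (rho : G -> H -> H)
  (A : H -> G) : Prop :=
  [/\ lin A,
      (forall u, A (alh u) = alg (A u)) &
      (forall u v, brg (A u) (A v) =
                   A (rho (A u) v - rho (A v) u + kappa *: brh u v))].

Definition HomPostLieAlg (V : lmodType K) (br : V -> V -> V)
  (star : V -> V -> V) (al : V -> V) : Prop :=
  HomLieAlg br al /\ [/\ bilin star,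
      (forall u v, al (star u v) = star (al u) (al v)),
      (forall u v w, star (al u) (br v w) = br (star u v) (al w) + br (al v) (star u w)),
      (forall u v w, star (br u v + star u v - star v u) (al w)
                     = star (al u) (star v w) - star (al v) (star u w)) &
      (forall u v w, star (al u) (br v w) = br (star u v) (al w) /\
                     br (star u v) (al w) = 0)].

End HomLie.

From mathcomp Require Import all_boot all_order all_algebra.
Set Implicit Arguments. Unset Strict Implicit. Unset Printing Implicit Defensive.
Import GRing.Theory.
Local Open Scope ring_scope.

(* Since [A] carries the descendent bracket [brA] to [brg], the representation
   axiom of [rho] along [brg (A u) (A v)] says that [u |-> rho (A u)] represents
   [(h, brA, alh)] on [h].  Everything else reduces to the vanishing conditions
   of an action, [brh (rho x u) (alh v) = 0] and its consequence
   [rho (alg x) (brh u v) = 0]: in the Jacobi identity for [brA] the terms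
   without [kappa] cancel by telescoping, and what remains is [kappa ^ 2] times
   the Jacobi identity of [h]. *)

Lemma subrACA (V : zmodType) (a b c d : V) : (a - b) - (c - d) = (a - c) - (b - d).
Proof. by rewrite !opprB addrACA [RHS]addrACA addrC [RHS]addrC (addrC (- c)). Qed.

Definition cyclic_sum (T : Type) (V : zmodType) (f : T -> T -> T -> V) x y z :=
  f x y z + f y z x + f z x y.

Section CyclicSum.
Variables (T : Type) (V : zmodType).
Implicit Types f g : T -> T -> T -> V.

Lemma cyclic_sumD f g x y z :
  cyclic_sum (fun x y z => f x y z + g x y z) x y z
  = cyclic_sum f x y z + cyclic_sum g x y z.
Proof. by rewrite /cyclic_sum /= (addrACA (f x y z)) (addrACA (f x y z + f y z x)). Qed.

Lemma cyclic_sumN f x y z :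
  cyclic_sum (fun x y z => - f x y z) x y z = - cyclic_sum f x y z.
Proof. by rewrite /cyclic_sum /= !opprD. Qed.

Lemma cyclic_sum_telescope f x y z :
  cyclic_sum (fun x y z => f x y z - f y z x) x y z = 0.
Proof. by rewrite /cyclic_sum /= [X in X + _]addrA subrK addrA subrK subrr. Qed.

Lemma cyclic_sum_telescope_rev f x y z :
  cyclic_sum (fun x y z => f x z y - f z y x) x y z = 0.
Proof. by rewrite -(cyclic_sum_telescope f x z y) /cyclic_sum /= addrAC. Qed.

End CyclicSum.

Lemma cyclic_sumZ (K : pzRingType) (V : lmodType K) (T : Type) (a : K)
  (f : T -> T -> T -> V) x y z :
  cyclic_sum (fun x y z => a *: f x y z) x y z = a *: cyclic_sum f x y z.
Proof. by rewrite /cyclic_sum /= !scalerDr. Qed.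

Section Linear.
Variable K : fieldType.
Implicit Types U V W : lmodType K.

Lemma lin0 V W (f : V -> W) : lin f -> f 0 = 0.
Proof.
move=> fL; have := fL 1 0 0; rewrite !scale1r addr0 => f0.
by apply: (addrI (f 0)); rewrite addr0 -f0.
Qed.

Lemma linD V W (f : V -> W) : lin f -> forall u v, f (u + v) = f u + f v.
Proof. by move=> fL u v; have := fL 1 u v; rewrite !scale1r. Qed.

Lemma linZ V W (f : V -> W) : lin f -> forall a u, f (a *: u) = a *: f u.
Proof. by move=> fL a u; have := fL a u 0; rewrite (lin0 fL) !addr0. Qed.

Lemma linB V W (f : V -> W) : lin f -> forall u v, f (u - v) = f u - f v.
Proof. by move=> fL u v; rewrite linD // -scaleN1r linZ // scaleN1r. Qed.

Lemma lin_add V W (f g : V -> W) : lin f -> lin g -> lin (fun x => f x + g x).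
Proof. by move=> fL gL a u v; rewrite fL gL scalerDr addrACA. Qed.

Lemma lin_opp V W (f : V -> W) : lin f -> lin (fun x => - f x).
Proof. by move=> fL a u v; rewrite fL opprD scalerN. Qed.

Lemma lin_scale V W (k : K) (f : V -> W) : lin f -> lin (fun x => k *: f x).
Proof. by move=> fL a u v; rewrite fL scalerDr !scalerA mulrC. Qed.

Lemma bilin_add U V W (b1 b2 : U -> V -> W) :
  bilin b1 -> bilin b2 -> bilin (fun u v => b1 u v + b2 u v).
Proof.
by move=> [b1r b1l] [b2r b2l]; split=> x; apply: lin_add; [apply: b1r | apply: b2r
  | apply: b1l | apply: b2l].
Qed.

Lemma bilin_opp U V W (b : U -> V -> W) : bilin b -> bilin (fun u v => - b u v).
Proof. by move=> [br bl]; split=> x; apply: lin_opp; [apply: br | apply: bl]. Qed.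

Lemma bilin_scale U V W (k : K) (b : U -> V -> W) :
  bilin b -> bilin (fun u v => k *: b u v).
Proof. by move=> [br bl]; split=> x; apply: lin_scale; [apply: br | apply: bl]. Qed.

Lemma bilin_swap V W (b : V -> V -> W) : bilin b -> bilin (fun u v => b v u).
Proof. by move=> [br bl]; split. Qed.

Lemma bilinDl U V W (b : U -> V -> W) :
  bilin b -> forall u u' v, b (u + u') v = b u v + b u' v.
Proof. by move=> [_ bl] u u' v; apply: (linD (bl v)). Qed.

Lemma bilinZl U V W (b : U -> V -> W) :
  bilin b -> forall a u v, b (a *: u) v = a *: b u v.
Proof. by move=> [_ bl] a u v; apply: (linZ (bl v)). Qed.

Lemma bilinDr U V W (b : U -> V -> W) :
  bilin b -> forall u v v', b u (v + v') = b u v + b u v'.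
Proof. by move=> [br _] u v v'; apply: (linD (br u)). Qed.

Lemma bilinBr U V W (b : U -> V -> W) :
  bilin b -> forall u v v', b u (v - v') = b u v - b u v'.
Proof. by move=> [br _] u v v'; apply: (linB (br u)). Qed.

Lemma bilinZr U V W (b : U -> V -> W) :
  bilin b -> forall a u v, b u (a *: v) = a *: b u v.
Proof. by move=> [br _] a u v; apply: (linZ (br u)). Qed.

Lemma HomLieAlg_scale V (k : K) (br : V -> V -> V) (al : V -> V) :
  HomLieAlg br al -> HomLieAlg (fun u v => k *: br u v) al.
Proof.
move=> [brL alL brN al_br jacobi]; split=> [||x y|x y|x y z].
- exact: bilin_scale.
- exact: alL.
- by rewrite brN scalerN.
- by rewrite (linZ alL) al_br.
- by rewrite /= !(bilinZr brL) -!scalerDr jacobi !scaler0.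
Qed.

End Linear.

Definition O_bracket (K : fieldType) (G H : lmodType K) (kappa : K)
  (brh : H -> H -> H) (rho : G -> H -> H) (A : H -> G) (u v : H) : H :=
  rho (A u) v - rho (A v) u + kappa *: brh u v.

Section OOperator.
Variables (K : fieldType) (kappa : K) (G H : lmodType K).
Variables (brg : G -> G -> G) (alg : G -> G) (brh : H -> H -> H) (alh : H -> H).
Variables (rho : G -> H -> H) (A : H -> G).
Hypothesis hH : HomLieAlg brh alh.
Hypothesis hrho : HomLieAction brg alg brh alh rho.
Hypothesis hA : OOperator kappa brg alg brh alh rho A.

Local Notation star := (fun u v => rho (A u) v).
Local Notation brA := (O_bracket kappa brh rho A).

Let brhL : bilin brh. Proof. by case: hH. Qed.
Let alhL : lin alh. Proof. by case: hH. Qed.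
Let rhoL : bilin rho. Proof. by case: hrho => -[]. Qed.
Let rho_alpha x v : rho (alg x) (alh v) = alh (rho x v).
Proof. by case: hrho => -[]. Qed.
Let rho_bracket x y v :
  rho (brg x y) (alh v) = rho (alg x) (rho y v) - rho (alg y) (rho x v).
Proof. by case: hrho => -[]. Qed.
Let rho_alpha_brh_derivation x u v :
  rho (alg x) (brh u v) = brh (rho x u) (alh v) + brh (alh u) (rho x v).
Proof. by case: hrho. Qed.
Let AL : lin A. Proof. by case: hA. Qed.
Let A_alpha u : A (alh u) = alg (A u). Proof. by case: hA. Qed.
Let A_bracket u v : brg (A u) (A v) = A (brA u v). Proof. by case: hA. Qed.

Lemma brh_rho_alpha x u v : brh (rho x u) (alh v) = 0.
Proof. by case: hrho. Qed.

Lemma brh_alpha_rho x u v : brh (alh u) (rho x v) = 0.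
Proof. by case: hH => _ _ brhN _ _; rewrite brhN brh_rho_alpha oppr0. Qed.

Lemma rho_alpha_brh x u v : rho (alg x) (brh u v) = 0.
Proof. by rewrite rho_alpha_brh_derivation brh_rho_alpha brh_alpha_rho addr0. Qed.

Lemma O_star_bilin : bilin star.
Proof.
split=> [u|v] a x y /=; first by rewrite (bilinDr rhoL) (bilinZr rhoL).
by rewrite AL (bilinDl rhoL) (bilinZl rhoL).
Qed.

Lemma O_bracket_bilin : bilin brA.
Proof.
apply: bilin_add; last exact: bilin_scale.
by apply: bilin_add; [exact: O_star_bilin | apply/bilin_opp/bilin_swap/O_star_bilin].
Qed.

Lemma O_star_bracket_alpha u v w :
  rho (A (brA u v)) (alh w)
  = rho (A (alh u)) (rho (A v) w) - rho (A (alh v)) (rho (A u) w).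
Proof. by rewrite -A_bracket rho_bracket !A_alpha. Qed.

Lemma O_bracket_alpha_bracket x y z :
  brA (alh x) (brA y z)
  = (rho (A (alh x)) (rho (A y) z) - rho (A (alh x)) (rho (A z) y))
  - (rho (A (alh y)) (rho (A z) x) - rho (A (alh z)) (rho (A y) x))
  + kappa *: (kappa *: brh (alh x) (brh y z)).
Proof.
have star_alpha_brh u v w : rho (A (alh u)) (brh v w) = 0.
  by rewrite A_alpha rho_alpha_brh.
rewrite [LHS]/O_bracket O_star_bracket_alpha /O_bracket.
rewrite (bilinDr rhoL) (bilinBr rhoL) (bilinZr rhoL) star_alpha_brh scaler0 addr0.
by rewrite (bilinDr brhL) (bilinBr brhL) (bilinZr brhL) !brh_alpha_rho subrr add0r.
Qed.

Lemma O_bracket_HomLieAlg : HomLieAlg brA alh.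
Proof.
case: hH => _ _ brhN al_brh jacobi.
split=> [||x y|x y|x y z].
- exact: O_bracket_bilin.
- exact: alhL.
- by rewrite /O_bracket [brh y x]brhN scalerN opprD opprB opprK.
- by rewrite /O_bracket linD // linB // linZ // al_brh !A_alpha !rho_alpha.
- pose P x y z := rho (A (alh x)) (rho (A y) z).
  pose J x y z := brh (alh x) (brh y z).
  change (cyclic_sum (fun x y z => brA (alh x) (brA y z)) x y z = 0).
  transitivity (cyclic_sum (fun x y z => (P x y z - P y z x) - (P x z y - P z y x)
                                         + kappa *: (kappa *: J x y z)) x y z).
    by rewrite /cyclic_sum /=; congr (_ + _ + _); rewrite O_bracket_alpha_bracket subrACA.
  rewrite 2!cyclic_sumD cyclic_sumN !cyclic_sumZ.
  rewrite (cyclic_sum_telescope P) (cyclic_sum_telescope_rev P) subrr add0r.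
  by rewrite [cyclic_sum J x y z]jacobi !scaler0.
Qed.

Lemma O_bracket_HomLieHom : HomLieHom brA alh brg alg A.
Proof. by split=> // u v; rewrite A_bracket. Qed.

Lemma O_star_HomLieAction : HomLieAction brA alh brh alh star.
Proof.
split=> [|x u v|x u v]; last exact: brh_rho_alpha.
  split=> [||x v|x y v] /=.
  - exact: O_star_bilin.
  - exact: alhL.
  - by rewrite A_alpha rho_alpha.
  - exact: O_star_bracket_alpha.
by rewrite /= A_alpha rho_alpha_brh_derivation.
Qed.

Lemma O_HomPostLieAlg : HomPostLieAlg (fun u v => kappa *: brh u v) star alh.
Proof.
split; first exact: HomLieAlg_scale.
split=> [|u v|u v w|u v w|u v w] /=.
- exact: O_star_bilin.
- by rewrite A_alpha rho_alpha.
- by rewrite A_alpha (bilinZr rhoL) rho_alpha_brh_derivation scalerDr.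
- have -> : kappa *: brh u v + rho (A u) v - rho (A v) u = brA u v.
    by rewrite /O_bracket [RHS]addrC addrA.
  exact: O_star_bracket_alpha.
- by rewrite A_alpha (bilinZr rhoL) rho_alpha_brh brh_rho_alpha !scaler0.
Qed.

End OOperator.

Theorem mainTheorem11 (K : fieldType) (charK0 : [pchar K] =i pred0) (kappa : K)
  (G H : lmodType K) (brg : G -> G -> G) (alg : G -> G)
  (brh : H -> H -> H) (alh : H -> H) (rho : G -> H -> H) (A : H -> G) :
  HomLieAlg brg alg -> HomLieAlg brh alh ->
  HomLieAction brg alg brh alh rho ->
  OOperator kappa brg alg brh alh rho A ->
  let br := fun u v => kappa *: brh u v in
  let star := fun u v => rho (A u) v in
  let brA := fun u v => rho (A u) v - rho (A v) u + kappa *: brh u v in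
  [/\ HomPostLieAlg br star alh,
      HomLieAlg brA alh /\ HomLieHom brA alh brg alg A &
      HomLieAction brA alh brh alh star].
Proof.
move=> _ hH hrho hA br star brA; split.
- exact: O_HomPostLieAlg hH hrho hA.
- by split; [exact: O_bracket_HomLieAlg hH hrho hA | exact: O_bracket_HomLieHom hA].
- exact: O_star_HomLieAction hH hrho hA.
Qed.
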